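(* Let $G$ be the cube graph $Q_3$, let $P$ be a pot realizing $G$ according to Scenario 3, and let $\lambda$ be an assembly design of $G$ with $P_\lambda(G)\subseteq P$. If $t\in P$ and $\lambda(v_i)=\lambda(v_j)=t$ for two distinct vertices $v_i\neq v_j$, then $t=\{a,b,c\}$ where the three cohesive-end types $a,b,c$ belong to three pairwise distinct bond-edge types.
   Context: Fix a set $\Sigma$ of symbols (bond-edge types) and a disjoint copy $\hat\Sigma=\{\hat a:a\in\Sigma\}$ with $\hat{\hat a}=a$; elements of $\Sigma\cup\hat\Sigma$ are cohesive-end types, and $x$ and $\hat x$ belong to the same bond-edge type. A tile is a finite multiset of cohesive-end types. A pot is a finite set $P$ of tiles such that whenever $x$ occurs in a tile of $P$, $\hat x$ occurs in some tile of $P$. Graphs are finite, loops and multiple edges allowed. An assembly design of a graph $H$ is a labeling $\lambda$ of the half-edges of $H$ by cohesive-end types such that the two half-edges of each edge receive complementary labels $x,\hat x$; $\lambda(v)=t_v$ denotes the multiset of labels of half-edges at vertex $v$, and $P_\lambda(H)=\{t_v: v\in V(H)\}$. $P$ realizes $H$ ($H\in\mathcal{O}(P)$) if some assembly design $\lambda$ has $P_\lambda(H)\subseteq P$. $P$ realizes $G$ according to Scenario 3 if $G\in\mathcal{O}(P)$, every $H\in\mathcal{O}(P)$ has $\#V(H)\ge\#V(G)$, and every $H\in\mathcal{O}(P)$ with $\#V(H)=\#V(G)$ is isomorphic to $G$. *)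

From mathcomp Require Import all_boot.
Set Implicit Arguments.
Unset Strict Implicit.
Unset Printing Implicit Defensive.

(* Cohesive-end types over a symbol type S : (a, false) is the symbol a,
   (a, true) is its hatted copy \hat a.  The bond-edge type of x is x.1. *)
Definition cet (S : eqType) := (S * bool)%type.
Definition hat (S : eqType) (x : cet S) : cet S := (x.1, ~~ x.2).
Definition bond_type (S : eqType) (x : cet S) : S := x.1.

(* A tile is a finite multiset of cohesive-end types, represented by a
   sequence considered up to permutation (perm_eq). *)
Definition tile (S : eqType) := seq (cet S).
Definition tile_eq (S : eqType) (t u : tile S) : bool := perm_eq t u.

Definition in_tiles (S : eqType) (t : tile S) (P : seq (tile S)) : bool :=
  has (tile_eq t) P.

Definition is_pot (S : eqType) (P : seq (tile S)) : Prop :=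
  forall t x, t \in P -> x \in t -> exists2 u, u \in P & hat x \in u.

(* Finite graphs with loops and multiple edges: each edge e has two
   half-edges (e,false) at src e and (e,true) at tgt e. *)
Record graph := Graph {
  gV : finType;
  gE : finType;
  gsrc : gE -> gV;
  gtgt : gE -> gV }.

Definition hend (H : graph) (h : gE H * bool) : gV H :=
  if h.2 then gtgt h.1 else gsrc h.1.

Definition assembly_design (S : eqType) (H : graph)
  (lam : gE H * bool -> cet S) : Prop :=
  forall e : gE H, lam (e, true) = hat (lam (e, false)).

Definition tile_at (S : eqType) (H : graph) (lam : gE H * bool -> cet S)
  (v : gV H) : tile S :=
  [seq lam h | h <- enum {: gE H * bool} & hend h == v].

Definition tiles_in (S : eqType) (H : graph) (lam : gE H * bool -> cet S)
  (P : seq (tile S)) : Prop :=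
  forall v : gV H, in_tiles (tile_at lam v) P.

Definition realizes (S : eqType) (P : seq (tile S)) (H : graph) : Prop :=
  exists lam : gE H * bool -> cet S, assembly_design lam /\ tiles_in lam P.

Definition graph_iso (H K : graph) : Prop :=
  exists (f : gV H -> gV K) (g : gE H -> gE K),
    bijective f /\ bijective g /\
    forall e, (gsrc (g e) = f (gsrc e) /\ gtgt (g e) = f (gtgt e)) \/
              (gsrc (g e) = f (gtgt e) /\ gtgt (g e) = f (gsrc e)).

(* Scenario 3 (graphs in O(P) are taken nonempty). *)
Definition scenario3 (S : eqType) (P : seq (tile S)) (G : graph) : Prop :=
  realizes P G /\
  (forall H : graph, 0 < #|gV H| -> realizes P H -> #|gV G| <= #|gV H|) /\
  (forall H : graph, 0 < #|gV H| -> realizes P H -> #|gV H| = #|gV G| ->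
     graph_iso H G).

(* The cube graph Q_3: vertices bool^3; edge (i, (x, y)) joins the two
   vertices whose coordinates other than i are (x, y) and whose i-th
   coordinate is false / true respectively. *)
Definition cube_vertex (i : 'I_3) (p : bool * bool) (b : bool)
  : bool * bool * bool :=
  let (x, y) := p in
  if val i == 0 then (b, x, y) else if val i == 1 then (x, b, y) else (x, y, b).

Definition Q3 : graph :=
  @Graph (bool * bool * bool)%type ('I_3 * (bool * bool))%type
    (fun e => cube_vertex e.1 e.2 false) (fun e => cube_vertex e.1 e.2 true).

From mathcomp Require Import all_boot.
Set Implicit Arguments.
Unset Strict Implicit.
Unset Printing Implicit Defensive.

(* If two half-edges of Q3 carry the same label, exchanging their endpoints
   gives a graph on the same vertices with the same tiles, so by Scenario 3 it
   is again isomorphic to Q3: loopless, without parallel edges, triangle-free.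
   If two half-edges at one vertex carried complementary labels, the twin of
   the first would carry the label of the second, and exchanging these two
   creates a loop; as v_i and v_j have the same tile, this also shows that they
   are not adjacent.  Two half-edges at
   v_i with equal labels would give two such half-edges at v_j, and an
   exhaustive check on Q3 shows that for nonadjacent v_i, v_j one of the four
   possible exchanges creates a double edge or a triangle. *)

Lemma hat_neq (S : eqType) (x : cet S) : hat x != x.
Proof. by case: x => a []; rewrite /hat xpair_eqE eqxx. Qed.

Lemma eq_bond_type (S : eqType) (x y : cet S) :
  bond_type x = bond_type y -> y = x \/ y = hat x.
Proof. by case: x => a b; case: y => _ c /= <-; case: b; case: c; auto. Qed.

Lemma count_gt1P (T : eqType) (a : pred T) (s : seq T) : uniq s ->
  reflect (exists x y, [/\ x != y, x \in s, y \in s, a x & a y]) (1 < count a s).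
Proof.
move=> s_uniq; rewrite -size_filter; apply: (iffP idP) => [|[x [y [xy xs ys ax ay]]]].
  have := filter_uniq a s_uniq; have := mem_filter a ^~ s.
  case: (filter a s) => [|x [|y r]] // mem_as /andP[]; rewrite inE negb_or => /andP[xy _] _ _.
  have /andP[ax xs] : a x && (x \in s) by rewrite -mem_as inE eqxx.
  have /andP[ay ys] : a y && (y \in s) by rewrite -mem_as !inE eqxx orbT.
  by exists x, y.
have xy_uniq : uniq [:: x; y] by rewrite /= inE xy.
apply: (uniq_leq_size xy_uniq) => z; rewrite !inE mem_filter.
by case/orP=> /eqP->; apply/andP.
Qed.

Definition transp (T : eqType) (a b x : T) : T :=
  if x == a then b else if x == b then a else x.

Lemma transpK (T : eqType) (a b : T) : involutive (transp a b).
Proof.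
move=> x; rewrite /transp.
case: (eqVneq x a) => [->|xa].
  by rewrite eqxx; case: (eqVneq b a) => [->|]; rewrite ?eqxx.
case: (eqVneq x b) => [->|xb]; first by rewrite eqxx.
by rewrite (negbTE xa) (negbTE xb).
Qed.

Lemma transp_eq_fun (T : eqType) (U : Type) (f : T -> U) (a b : T) :
  f a = f b -> f \o transp a b =1 f.
Proof.
by move=> fab x; rewrite /= /transp; case: ifP => [/eqP->|_] //; case: ifP => // /eqP->.
Qed.

Definition links (V : eqType) (p : V * V) (u w : V) : bool := (p == (u, w)) || (p == (w, u)).

Section HalfEdges.

Variable H : graph.
Implicit Types (e : gE H) (h : gE H * bool) (u w : gV H).

Definition twin h : gE H * bool := (h.1, ~~ h.2).

Lemma assembly_design_twin (S : eqType) (lam : gE H * bool -> cet S) :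
  assembly_design lam -> forall h, lam (twin h) = hat (lam h).
Proof. by move=> des [e []]; rewrite /twin /= des // /hat /= negbK; case: (lam _). Qed.

Definition ends e : gV H * gV H := (gsrc e, gtgt e).

Definition joins e u w : bool := links (ends e) u w.

Lemma joinsE e u w :
  joins e u w = (gsrc e == u) && (gtgt e == w) || (gsrc e == w) && (gtgt e == u).
Proof. by rewrite /joins /links !xpair_eqE. Qed.

Lemma joinsC e u w : joins e u w = joins e w u.
Proof. by rewrite /joins /links orbC. Qed.

Definition adjacent u w : Prop := exists e, joins e u w.

Lemma adjacent_twin u w : adjacent u w -> exists h, hend h = u /\ hend (twin h) = w.
Proof.
by case=> e; rewrite joinsE => /orP[] /andP[/eqP su /eqP tw];
  [exists (e, false) | exists (e, true)].
Qed.

End HalfEdges.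

(* In a loopless graph, a vertex adjacent to both ends of an edge closes a triangle. *)
Definition simple_triangle_free (H : graph) : Prop :=
  [/\ forall e : gE H, gsrc e <> gtgt e,
      forall e e' : gE H, joins e' (gsrc e) (gtgt e) -> e' = e &
      forall (e : gE H) w, ~ (adjacent (gsrc e) w /\ adjacent (gtgt e) w)].

Lemma graph_iso_simple_triangle_free (H K : graph) :
  graph_iso H K -> simple_triangle_free K -> simple_triangle_free H.
Proof.
move=> [f [g [_ [[g' gK _] g_ends]]]] [loopless no_parallel no_triangle].
have joins_g e u w : joins e u w -> joins (g e) (f u) (f w).
  by rewrite !joinsE; case: (g_ends e) => -[-> ->] /orP[] /andP[/eqP<- /eqP<-];
    rewrite !eqxx ?orbT.
have adjacent_f u w : adjacent u w -> adjacent (f u) (f w).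
  by case=> e /joins_g; exists (g e).
split=> [e loop | e e' /joins_g j | e w [/adjacent_f adj_s /adjacent_f adj_t]].
- by apply: (loopless (g e)); case: (g_ends e) => -[-> ->]; rewrite loop.
- apply: (can_inj gK); apply: (no_parallel (g e) (g e')).
  by case: (g_ends e) => -[-> ->]; rewrite // joinsC.
- by apply: (no_triangle (g e) (f w)); case: (g_ends e) => -[-> ->].
Qed.

Section EnumeratedGraph.

Variables (H : graph) (vs : seq (gV H)) (es : seq (gE H)).
Hypotheses (vsP : forall v, v \in vs) (es_uniq : uniq es) (esP : forall e, e \in es).

(* The endpoints are listed once, so that [vm_compute] evaluates each of them only once. *)
Definition simple_triangle_freeb : bool :=
  let ends_es := map (@ends H) es in
  let adjacentb u w := has (fun p => links p u w) ends_es in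
  [&& all (fun p => p.1 != p.2) ends_es,
      all (fun p => count (fun q => links q p.1 p.2) ends_es <= 1) ends_es &
      all (fun p => all (fun w => ~~ (adjacentb p.1 w && adjacentb p.2 w)) vs) ends_es].

Lemma adjacentP u w : reflect (adjacent u w) (has (fun p => links p u w) (map (@ends H) es)).
Proof. by rewrite has_map; apply: (iffP hasP) => [[e _ j] | [e j]]; exists e. Qed.

Lemma simple_triangle_freeP : reflect (simple_triangle_free H) simple_triangle_freeb.
Proof.
rewrite /simple_triangle_freeb /= !all_map.
apply: (iffP and3P) => [[/allP loopless /allP no_parallel /allP no_triangle] |
                        [loopless no_parallel no_triangle]]; split.
- by move=> e; apply/eqP/loopless.
- move=> e e' j; apply: contraTeq (no_parallel e (esP e)) => e'e.
  rewrite /= count_map -ltnNge; apply/(count_gt1P _ es_uniq).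
  by exists e', e; rewrite !esP; split=> //; rewrite /= /links eqxx.
- move=> e w [/adjacentP adj_s /adjacentP adj_t].
  by move/allP: (no_triangle e (esP e)) => /(_ w (vsP w)); rewrite /= adj_s adj_t.
- by apply/allP => e _; apply/eqP/loopless.
- apply/allP => e _; rewrite /= count_map leqNgt; apply/(count_gt1P _ es_uniq).
  by case=> [x [y [xy _ _ /no_parallel x_e /no_parallel y_e]]]; rewrite x_e y_e eqxx in xy.
- apply/allP => e _; apply/allP => w _; apply/negP => /andP[/adjacentP ? /adjacentP ?].
  exact: (no_triangle e w).
Qed.

End EnumeratedGraph.

Arguments simple_triangle_freeb : clear implicits.
Arguments simple_triangle_freeP H {vs es}.

Section SwapEnds.

Variables (H : graph) (h k : gE H * bool).

Definition swap_ends : graph :=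
  @Graph (gV H) (gE H) (fun e => hend (transp h k (e, false)))
                       (fun e => hend (transp h k (e, true))).

Lemma hend_swap_ends x : @hend swap_ends x = hend (transp h k x).
Proof. by case: x => e []. Qed.

Lemma tile_at_swap_ends (S : eqType) (lam : gE H * bool -> cet S) v :
  lam h = lam k -> perm_eq (@tile_at S swap_ends lam v) (tile_at lam v).
Proof.
move=> lam_hk; rewrite /tile_at.
rewrite (eq_filter (a2 := preim (transp h k) (fun x => hend x == v))); last first.
  by move=> x; rewrite /= hend_swap_ends.
rewrite -(eq_map (transp_eq_fun lam_hk)) map_comp -filter_map.
apply/perm_map/perm_filter/uniq_perm; rewrite ?enum_uniq //.
  by rewrite (map_inj_uniq (can_inj (transpK h k))) enum_uniq.
move=> x; rewrite [RHS]mem_enum; apply/mapP; exists (transp h k x).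
  by rewrite mem_enum.
by rewrite transpK.
Qed.

End SwapEnds.

Lemma swap_ends_twin_loop (H : graph) (h k : gE H * bool) : h != k -> hend h = hend k ->
  @gsrc (swap_ends (twin h) k) h.1 = @gtgt (swap_ends (twin h) k) h.1.
Proof.
case: h => e b hk ends; rewrite /= /transp /twin /= !xpair_eqE eqxx /=.
by case: b hk ends => /negbTE hk ends /=; rewrite hk.
Qed.

Lemma scenario3_swap_ends (S : eqType) (P : seq (tile S)) (G : graph)
    (lam : gE G * bool -> cet S) (h k : gE G * bool) :
  scenario3 P G -> assembly_design lam -> tiles_in lam P -> lam h = lam k ->
  graph_iso (swap_ends h k) G.
Proof.
move=> [_ [_ iso_min]] des tiles lam_hk; apply: iso_min => //.
  by apply/card_gt0P; exists (hend h).
exists lam; split=> // v; case/hasP: (tiles v) => u uP tile_u.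
by apply/hasP; exists u; rewrite // /tile_eq (perm_trans (tile_at_swap_ends v lam_hk)).
Qed.

Definition bool_pairs : seq (bool * bool) :=
  [seq (x, y) | x <- [:: true; false], y <- [:: true; false]].

Definition cube_vertices : seq (gV Q3) :=
  [seq (p, z) | p <- bool_pairs, z <- [:: true; false]].

Definition cube_edges : seq (gE Q3) :=
  [seq (i, p) | i <- [:: @Ordinal 3 0 isT; @Ordinal 3 1 isT; @Ordinal 3 2 isT],
                p <- bool_pairs].

Definition cube_half_edges (v : gV Q3) : seq (gE Q3 * bool) :=
  let: (x, y, z) := v in
  [:: (@Ordinal 3 0 isT, (y, z), x); (@Ordinal 3 1 isT, (x, z), y);
      (@Ordinal 3 2 isT, (x, y), z)].

Lemma mem_cube_vertices v : v \in cube_vertices.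
Proof. by case: v => [[[] []] []]. Qed.

Lemma mem_cube_edges e : e \in cube_edges.
Proof. by case: e => [[[|[|[|?]]] ?] [[] []]]. Qed.

Lemma cube_edges_uniq : uniq cube_edges.
Proof. by []. Qed.

Lemma mem_cube_half_edges v h : (h \in cube_half_edges v) = (hend h == v).
Proof. by case: v => [[[] []] []]; case: h => [[[[|[|[|?]]] ?] [[] []]] []]. Qed.

Lemma cube_half_edges_uniq v : uniq (cube_half_edges v).
Proof. by case: v => [[[] []] []]. Qed.

Lemma size_cube_half_edges v : size (cube_half_edges v) = 3.
Proof. by case: v => [[? ?] ?]. Qed.

Lemma tile_at_Q3 (S : eqType) (lam : gE Q3 * bool -> cet S) v :
  perm_eq (tile_at lam v) (map lam (cube_half_edges v)).
Proof.
apply/perm_map/uniq_perm.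
- exact: filter_uniq (enum_uniq _).
- exact: cube_half_edges_uniq.
- by move=> h; rewrite mem_filter mem_enum andbT mem_cube_half_edges.
Qed.

Lemma Q3_simple_triangle_free : simple_triangle_free Q3.
Proof.
by apply/(simple_triangle_freeP Q3 mem_cube_vertices cube_edges_uniq mem_cube_edges); vm_compute.
Qed.

(* Tabulating the simple exchanges once per pair of vertices keeps the check below fast. *)
Definition simple_swaps (vi vj : gV Q3) : seq ((gE Q3 * bool) * (gE Q3 * bool)) :=
  [seq hk <- [seq (h, k) | h <- cube_half_edges vi, k <- cube_half_edges vj]
     | simple_triangle_freeb (swap_ends hk.1 hk.2) cube_vertices cube_edges].

Lemma mem_simple_swaps vi vj h k : hend h = vi -> hend k = vj ->
  simple_triangle_free (swap_ends h k) -> (h, k) \in simple_swaps vi vj.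
Proof.
move=> <- <- /(simple_triangle_freeP (swap_ends h k) mem_cube_vertices cube_edges_uniq
                  mem_cube_edges) simple.
by rewrite mem_filter simple allpairs_f // mem_cube_half_edges.
Qed.

Lemma Q3_swap_nonadjacent (vi vj : gV Q3) (h h' k k' : gE Q3 * bool) :
  vi != vj -> ~ adjacent vi vj -> h != h' -> k != k' ->
  hend h = vi -> hend h' = vi -> hend k = vj -> hend k' = vj ->
  ~ [/\ simple_triangle_free (swap_ends h k), simple_triangle_free (swap_ends h k'),
        simple_triangle_free (swap_ends h' k) & simple_triangle_free (swap_ends h' k')].
Proof.
have check : all (fun vi => all (fun vj =>
    (vi != vj) ==> ~~ has (fun e => joins e vi vj) cube_edges ==>
    let S := simple_swaps vi vj in
    all (fun h => all (fun h' => (h != h') ==>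
      all (fun k => all (fun k' => (k != k') ==>
        ~~ [&& (h, k) \in S, (h, k') \in S, (h', k) \in S & (h', k') \in S])
      (cube_half_edges vj)) (cube_half_edges vj))
    (cube_half_edges vi)) (cube_half_edges vi)) cube_vertices) cube_vertices.
  by vm_compute.
move=> vij not_adj hh' kk' hi h'i kj k'j [s_hk s_hk' s_h'k s_h'k'].
have not_adj_b : ~~ has (fun e => joins e vi vj) cube_edges.
  by apply/hasP => -[e _ j]; apply: not_adj; exists e.
have at_v v x : hend x = v -> x \in cube_half_edges v by move=> <-; rewrite mem_cube_half_edges.
move/allP/(_ vi (mem_cube_vertices vi))/allP/(_ vj (mem_cube_vertices vj)): check.
rewrite vij not_adj_b /= => /allP/(_ h (at_v _ _ hi))/allP/(_ h' (at_v _ _ h'i)).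
rewrite hh' => /allP/(_ k (at_v _ _ kj))/allP/(_ k' (at_v _ _ k'j)); rewrite kk' /=.
by rewrite !mem_simple_swaps.
Qed.

Section Scenario3Q3.

Variables (S : eqType) (P : seq (tile S)) (lam : gE Q3 * bool -> cet S).
Hypotheses (sc : scenario3 P Q3) (des : assembly_design lam) (tiles : tiles_in lam P).

Lemma swap_equal_labels_simple h k :
  lam h = lam k -> simple_triangle_free (swap_ends h k).
Proof.
move=> lam_hk; apply: graph_iso_simple_triangle_free Q3_simple_triangle_free.
exact: scenario3_swap_ends sc des tiles lam_hk.
Qed.

Lemma no_complementary_labels h h' : hend h = hend h' -> lam h' != hat (lam h).
Proof.
move=> hh'_ends; apply/eqP=> lam_h'.
have hh' : h != h'.
  by apply/eqP=> eq_hh'; move: (hat_neq (lam h)); rewrite -lam_h' eq_hh' eqxx.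
have [loopless _ _] : simple_triangle_free (swap_ends (twin h) h').
  by apply: swap_equal_labels_simple; rewrite assembly_design_twin.
exact: (loopless h.1 (swap_ends_twin_loop hh' hh'_ends)).
Qed.

Variables vi vj : gV Q3.
Hypotheses (vij : vi != vj) (same_tile : perm_eq (tile_at lam vi) (tile_at lam vj)).

Lemma same_tile_labels :
  perm_eq (map lam (cube_half_edges vi)) (map lam (cube_half_edges vj)).
Proof. by rewrite -(permPl (tile_at_Q3 lam vi)) -(permPr (tile_at_Q3 lam vj)). Qed.

Lemma same_tile_nonadjacent : ~ adjacent vi vj.
Proof.
case/adjacent_twin=> h [hi twin_j].
have : lam (twin h) \in map lam (cube_half_edges vi).
  by rewrite (perm_mem same_tile_labels) map_f // mem_cube_half_edges twin_j.
case/mapP=> h' h'i; rewrite assembly_design_twin // => /esym/eqP.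
by apply/negP/no_complementary_labels; rewrite hi; apply/esym/eqP; rewrite -mem_cube_half_edges.
Qed.

Lemma same_tile_distinct_labels h h' :
  hend h = vi -> hend h' = vi -> h != h' -> lam h != lam h'.
Proof.
move=> hi h'i hh'; apply/eqP=> lam_hh'.
have : 1 < count (pred1 (lam h)) (map lam (cube_half_edges vi)).
  rewrite count_map; apply/(count_gt1P _ (cube_half_edges_uniq vi)).
  by exists h, h'; rewrite !mem_cube_half_edges hi h'i /= lam_hh' !eqxx.
rewrite (permP same_tile_labels) count_map => /(count_gt1P _ (cube_half_edges_uniq vj)).
case=> k [k' [kk' kj k'j /eqP lam_k /eqP lam_k']].
rewrite !mem_cube_half_edges in kj k'j.
apply: (Q3_swap_nonadjacent vij same_tile_nonadjacent hh' kk' hi h'i (eqP kj) (eqP k'j)).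
by split; apply: swap_equal_labels_simple; rewrite -?lam_hh' ?lam_k ?lam_k'.
Qed.

Lemma same_tile_distinct_bond_types : {in cube_half_edges vi &, forall h h',
  h != h' -> bond_type (lam h) != bond_type (lam h')}.
Proof.
move=> h h'; rewrite !mem_cube_half_edges => /eqP hi /eqP h'i hh'.
apply/eqP=> /eq_bond_type[lam_h' | lam_h'].
  by move: (same_tile_distinct_labels hi h'i hh'); rewrite lam_h' eqxx.
have ends_hh' : hend h = hend h' by rewrite hi h'i.
by move: (no_complementary_labels ends_hh'); rewrite lam_h' eqxx.
Qed.

End Scenario3Q3.

Theorem lemma4 (S : eqType) (P : seq (tile S)) (lam : gE Q3 * bool -> cet S)
  (t : tile S) (vi vj : gV Q3) :
  is_pot P -> scenario3 P Q3 ->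
  assembly_design lam -> tiles_in lam P ->
  in_tiles t P ->
  vi != vj -> tile_eq (tile_at lam vi) t -> tile_eq (tile_at lam vj) t ->
  exists a b c : cet S,
    [/\ tile_eq t [:: a; b; c],
        bond_type a != bond_type b,
        bond_type a != bond_type c &
        bond_type b != bond_type c].
Proof.
move=> _ sc des tiles _ vij ti tj.
have same_tile : perm_eq (tile_at lam vi) (tile_at lam vj) by rewrite (permPl ti) perm_sym.
have labels : perm_eq t (map lam (cube_half_edges vi)).
  by rewrite -(permPr (tile_at_Q3 lam vi)) perm_sym.
move: (cube_half_edges vi) (size_cube_half_edges vi) (cube_half_edges_uniq vi) labels
  (same_tile_distinct_bond_types sc des tiles vij same_tile).
case=> [|h1 [|h2 [|h3 []]]] //= _.
rewrite !inE !negb_or => /and3P[/andP[h12 h13] h23 _] labels distinct.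
by exists (lam h1), (lam h2), (lam h3); split=> //; apply: distinct; rewrite ?inE ?eqxx ?orbT.
Qed.
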